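(* Fix an ordinal $\beta\leq\omega_1$ and consider $\mathbb{S}(\beta)$, with $R_\alpha=\mathcal{O}^\alpha(\sim_e)$. For every $\alpha<\beta$, the restriction of $R_\alpha$ to $I\times(\alpha+1)$ (i.e. to pairs of points of $I\times(\alpha+1)$) is the identity relation, and $V\times\{\alpha\}\in\Sigma(R_\alpha)$, where $\Sigma=\mathcal{B}_V\otimes\mathcal{P}(\beta)$.
   Context: An LMP is $(S,\Sigma,\{\tau_a\}_{a\in L})$ with $L$ countable and Markov kernels $\tau_a$. $\Sigma(R)$ = $R$-closed members of $\Sigma$ ($x\in A$, $xRs\Rightarrow s\in A$); $\mathcal{R}(\Gamma)=\{(s,t):\forall A\in\Gamma\,(s\in A\iff t\in A)\}$; $\mathcal{R}^T(\Lambda)=\{(s,t):\forall a\,\forall E\in\Lambda\ \tau_a(s,E)=\tau_a(t,E)\}$; $\mathcal{O}(R)=\mathcal{R}^T(\Sigma(R))$, $\mathcal{O}^0(R)=R$, $\mathcal{O}^{\alpha+1}=\mathcal{O}\circ\mathcal{O}^\alpha$, $\mathcal{O}^\lambda(R)=\bigcap_{\alpha<\lambda}\mathcal{O}^\alpha(R)$. ${\sim_e}=\mathcal{R}(\sigma(\llbracket\mathcal{L}\rrbracket))$ where $\sigma(\llbracket\mathcal{L}\rrbracket)$ is generated by the denotations of formulas $\top\mid\phi\wedge\psi\mid\langle a\rangle_{>q}\phi$ ($q\in\mathbb{Q}\cap[0,1]$), $\llbracket\langle a\rangle_{>q}\phi\rrbracket=\{s:\tau_a(s,\llbracket\phi\rrbracket)>q\}$.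 The processes $\mathbb{S}(\beta)$: $I=(0,1)$, $\mathfrak{m}$ Lebesgue measure, $V\subseteq I$ Lebesgue nonmeasurable, $\mathcal{B}_V=\sigma(\mathcal{B}(I)\cup\{V\})$, and $\mathfrak{m}_0,\mathfrak{m}_1$ measures on $\mathcal{B}_V$ extending $\mathfrak{m}$ with $\mathfrak{m}_0(V)\neq\mathfrak{m}_1(V)$. Let $\{q_n\}_{n\in\omega}$ enumerate $\mathbb{Q}\cap I$. For ordinals $\eta$: $\alpha_n(0)=0$, $\alpha_n(\zeta+1)=\zeta$ for all $n$, and for limit $\lambda$, $(\alpha_n(\lambda))_{n\in\omega}$ is a fixed strictly increasing sequence of nonzero ordinals below $\lambda$ cofinal in $\lambda$. For an ordinal $\beta\leq\omega_1$, $\mathbb{S}(\beta)=(I\times\beta,\ \mathcal{B}_V\otimes\mathcal{P}(\beta),\ \{\tau_n\}_{n\in\omega})$ with $\tau_n((x,\eta),A)=x\cdot\mathfrak{m}_0(A_0)$ if $\eta=0$; $=\mathfrak{m}_0(A_{\alpha_n(\eta)})$ if $\eta>0$ and $x<q_n$; $=\mathfrak{m}_1(A_{\alpha_n(\eta)})$ if $\eta>0$ and $x\geq q_n$; here $A_\gamma=\{r:(r,\gamma)\in A\}$. These $\tau_n$ are Markov kernels, so $\mathbb{S}(\beta)$ is an LMP. *)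

From HB Require Import structures.
From mathcomp Require Import all_boot all_order all_algebra.
From mathcomp Require Import all_classical all_reals all_analysis.

Set Implicit Arguments.
Unset Strict Implicit.
Unset Printing Implicit Defensive.

Import Order.TTheory GRing.Theory Num.Theory.
Local Open Scope classical_set_scope.
Local Open Scope ring_scope.

(* Ordinals: an ordinal beta is represented by a type B of its elements *)
(* (the ordinals alpha < beta) with a strict well-founded total order.  *)

Section Ordinals.
Variables (B : Type) (lt : B -> B -> Prop).

Definition is_well_order : Prop :=
  well_founded lt /\
  (forall a b c, lt a b -> lt b c -> lt a c) /\
  (forall a b, lt a b \/ a = b \/ lt b a).

(* beta <= omega_1 : every alpha < beta is countable, i.e. its set of
   predecessors is enumerated by nat *)
Definition countable_initial_segments : Prop :=
  forall a : B, exists f : nat -> B, forall g, lt g a -> exists n, f n = g.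

Definition is_zero (a : B) : Prop := forall b, ~ lt b a.
Definition le (a b : B) : Prop := lt a b \/ a = b.
Definition is_succ_of (a g : B) : Prop :=
  lt g a /\ forall d, lt g d -> ~ lt d a.
Definition is_limit (a : B) : Prop :=
  ~ is_zero a /\ ~ (exists g, is_succ_of a g).

Definition fundamental_sequences (alpha : nat -> B -> B) : Prop :=
  (forall n a, is_zero a -> alpha n a = a) /\
  (forall n a g, is_succ_of a g -> alpha n a = g) /\
  (forall l, is_limit l ->
     (forall n, lt (alpha n l) (alpha n.+1 l)) /\
     (forall n, ~ is_zero (alpha n l)) /\
     (forall n, lt (alpha n l) l) /\
     (forall g, lt g l -> exists n, lt g (alpha n l))).

End Ordinals.

Section LMP.
Variables (R : realType) (S : Type).
Variable (Sigma : set (set S)).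
Variable (tau : nat -> S -> set S -> \bar R).

Definition rel_of (Gamma : set (set S)) : S -> S -> Prop :=
  fun s t => forall A, Gamma A -> (A s <-> A t).

Definition closed_sets (Rl : S -> S -> Prop) : set (set S) :=
  [set A | Sigma A /\ forall x s, A x -> Rl x s -> A s].

Definition relT (Lambda : set (set S)) : S -> S -> Prop :=
  fun s t => forall a E, Lambda E -> tau a s E = tau a t E.

Definition Oop (Rl : S -> S -> Prop) : S -> S -> Prop :=
  relT (closed_sets Rl).

Inductive formula :=
  | FTop
  | FAnd of formula & formula
  | FDia of nat & rat & formula.

Fixpoint formula_wf (f : formula) : Prop :=
  match f with
  | FTop => True
  | FAnd f1 f2 => formula_wf f1 /\ formula_wf f2
  | FDia _ q f1 => (0 <= q <= 1)%R /\ formula_wf f1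
  end.

Fixpoint denot (f : formula) : set S :=
  match f with
  | FTop => setT
  | FAnd f1 f2 => denot f1 `&` denot f2
  | FDia a q f1 => [set s | ((ratr q)%:E < tau a s (denot f1))%E]
  end.

Definition denotations : set (set S) :=
  [set A | exists f, formula_wf f /\ A = denot f].

Definition sim_e : S -> S -> Prop := rel_of (<<s denotations >>).

End LMP.

Section Iterate.
Variables (B : Type) (lt : B -> B -> Prop) (wf : well_founded lt).
Variables (S : Type) (O : (S -> S -> Prop) -> (S -> S -> Prop)).
Variable (R0 : S -> S -> Prop).

Definition Oiter_step (a : B) (rec : forall g, lt g a -> S -> S -> Prop)
  : S -> S -> Prop :=
  fun s t =>
    (is_zero lt a /\ R0 s t) \/
    (exists g (h : lt g a), is_succ_of lt a g /\ O (rec g h) s t) \/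
    (is_limit lt a /\ forall g (h : lt g a), rec g h s t).

Definition Oiter : B -> S -> S -> Prop :=
  Fix wf (fun _ => S -> S -> Prop) Oiter_step.

End Iterate.

Section Sbeta.
Variable R : realType.

Definition Iset : set R := [set x | 0 < x < 1].
Definition I : Type := {x : R | 0 < x < 1}.

Lemma half_in_I : (0 : R) < (2 : R)^-1 < 1.
Proof. apply/andP; split; [by rewrite invr_gt0 ltr0n | by rewrite invf_lt1 ?ltr0n // ltr1n]. Qed.

HB.instance Definition _ := Choice.copy I {x : R | 0 < x < 1}.
HB.instance Definition _ := isPointed.Build I (exist _ ((2 : R)^-1) half_in_I).

Definition Borel_I : set (set I) :=
  [set A | measurable (sval @` A : set (measurableTypeR R))].

(* Lebesgue measurable subsets of R (completed Lebesgue sigma-algebra) *)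
Definition lebesgue_measurable (A : set R) : Prop :=
  measurable (A : set (caratheodory_type (R:=R) (wlength (R:=R) idfun)^*%mu)).

Definition BV_gen (V : set I) : set (set I) := Borel_I `|` [set V].
Definition BV (V : set I) : set (set I) := <<s BV_gen V >>.
End Sbeta.
Notation BVType V := (g_sigma_algebraType (BV_gen V)).
Section Sbeta2.
Variable R : realType.

Definition ratI : set R := [set x | (exists r : rat, x = ratr r) /\ 0 < x < 1].

Definition enumerates_QI (q : nat -> R) : Prop :=
  injective q /\ (forall n, ratI (q n)) /\ (forall x, ratI x -> exists n, q n = x).

Variables (B : Type) (lt : B -> B -> Prop).

Definition state := (I R * B)%type.

Definition SigmaS (V : set (I R)) : set (set state) :=
  <<s [set X | exists A (C : set B), BV V A /\ X = A `*` C] >>.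

Definition section (A : set state) (g : B) : set (I R) := [set r | A (r, g)].

Variables (q : nat -> R) (alpha : nat -> B -> B) (m0 m1 : set (I R) -> \bar R).

Definition tauS (n : nat) (s : state) (A : set state) : \bar R :=
  let: (x, eta) := s in
  if `[< is_zero lt eta >] then ((sval x)%:E * m0 (section A eta))%E
  else if sval x < q n then m0 (section A (alpha n eta))
  else m1 (section A (alpha n eta)).

End Sbeta2.

From HB Require Import structures.
From mathcomp Require Import all_boot all_order all_algebra.
From mathcomp Require Import all_classical all_reals all_analysis.
Import Order.TTheory GRing.Theory Num.Theory.
Local Open Scope classical_set_scope.
Local Open Scope ring_scope.
Set Implicit Arguments.
Unset Strict Implicit.
Unset Printing Implicit Defensive.

(* Both claims follow from "R_a moves no state of a level g <= a", proved by
   well-founded induction on a.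
   - For a = 0, R_0 = ~_e, and the formulas <0>_{>r} T read off the total
     mass tau_0((x,g), S), which is x on level 0 and 1 elsewhere.
   - For a > 0, a pair ((z,g),(y,eta)) in R_a lies in O(R_c) for some c < a
     above any prescribed h < a; by induction R_c fixes level h, so each
     rectangle A x {h} with A in B_V is R_c-closed and gets the same
     tau-measure at both states.  The total mass separates level 0 from the
     others; for g > 0, testing with I x {alpha_n(g)} recovers the
     fundamental sequence of eta, hence eta = g, and testing with
     V x {alpha_n(g)}, where m0(V) <> m1(V), separates z from y by a
     rational q_n between them. *)

Section WellOrders.
Variables (B : Type) (lt : B -> B -> Prop).
Hypothesis Hwf : well_founded lt.
Hypothesis Htrans : forall a b c, lt a b -> lt b c -> lt a c.
Hypothesis Htotal : forall a b, lt a b \/ a = b \/ lt b a.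

Lemma lt_irrefl x : ~ lt x x.
Proof. by elim: (Hwf x) => y _ IH yy; exact: (IH y yy yy). Qed.

Lemma zero_uniq a b : is_zero lt a -> is_zero lt b -> a = b.
Proof. by move=> za zb; case: (Htotal a b) => [/zb|[|/za]]. Qed.

Lemma succ_uniq a b g : is_succ_of lt a g -> is_succ_of lt b g -> a = b.
Proof.
move=> [ga Ha] [gb Hb]; case: (Htotal a b) => [ab|[//|ba]].
- by case: (Hb a ga ab).
- by case: (Ha b gb ba).
Qed.

Lemma nonzero_cases a :
  ~ is_zero lt a -> is_limit lt a \/ exists g, is_succ_of lt a g.
Proof.
by move=> nz; case: (pselect (exists g, is_succ_of lt a g)) => h; [right|left].
Qed.

Lemma nonzero_has_pred a : ~ is_zero lt a -> exists b, lt b a.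
Proof. by move=> nz; apply: contra_notP nz => h b hb; apply: h; exists b. Qed.

Lemma succ_exists g d : lt g d -> exists d', is_succ_of lt d' g.
Proof.
elim: (Hwf d) => {}d _ IH gd.
case: (pselect (exists e, lt g e /\ lt e d)) => [[e [ge ed]]|h].
  exact: (IH e ed ge).
by exists d; split => // e ge ed; apply: h; exists e.
Qed.

Lemma lt_succ_le d g c : is_succ_of lt d g -> lt c d -> le lt c g.
Proof.
move=> [gd Hd] cd; case: (Htotal c g) => [cg|[cg|gc]]; [by left|by right|].
by case: (Hd c gc cd).
Qed.

Lemma succ_below_limit g d l :
  is_limit lt l -> lt g l -> is_succ_of lt d g -> lt d l.
Proof.
move=> [_ nsucc] gl sd; case: (Htotal d l) => [//|[e|ld]].
- by subst d; case: nsucc; exists g.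
- by case: (sd.2 l gl ld).
Qed.

Variable alpha : nat -> B -> B.
Hypothesis Halpha : fundamental_sequences lt alpha.

Lemma alpha_lt c n : ~ is_zero lt c -> lt (alpha n c) c.
Proof.
move: Halpha => [_ [Hs Hl]] nz.
case: (nonzero_cases nz) => [/Hl [_ [_ [H _]]]//|[g Hg]].
by rewrite (Hs _ _ _ Hg); case: Hg.
Qed.

(* A nonzero ordinal is determined by its fundamental sequence: a limit
   sequence is strictly increasing while a successor sequence is constant,
   and a limit is the supremum of its sequence. *)
Lemma fundamental_sequences_inj c d :
  ~ is_zero lt c -> ~ is_zero lt d -> (forall n, alpha n c = alpha n d) -> c = d.
Proof.
move=> zc zd E; have [_ [Hs Hl]] := Halpha.
have lim_succ c' d' g : is_limit lt c' -> is_succ_of lt d' g ->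
    (forall n, alpha n c' = alpha n d') -> False.
  move=> /Hl [incr _] sd E'.
  by have := incr 0%N; rewrite !E' !(Hs _ _ _ sd); exact: lt_irrefl.
have lim_lim c' d' : is_limit lt c' -> is_limit lt d' ->
    (forall n, alpha n c' = alpha n d') -> ~ lt c' d'.
  move=> /Hl [_ [_ [ltc _]]] /Hl [_ [_ [_ cof]]] E' cd.
  have [m Hm] := cof c' cd; rewrite -E' in Hm.
  exact: (lt_irrefl (Htrans Hm (ltc m))).
case: (nonzero_cases zc) => [lc|[g sc]]; case: (nonzero_cases zd) => [ld|[g' sd]].
- case: (Htotal c d) => [cd|[//|dc]]; first by case: (lim_lim c d lc ld E cd).
  by case: (lim_lim d c ld lc (fun n => esym (E n)) dc).
- by case: (lim_succ c d g' lc sd E).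
- by case: (lim_succ d c g ld sc (fun n => esym (E n))).
- have := E 0%N; rewrite (Hs _ _ _ sc) (Hs _ _ _ sd) => eg; subst g'.
  exact: (succ_uniq sc sd).
Qed.

End WellOrders.

Section Iterates.
Variables (B : Type) (lt : B -> B -> Prop) (Hwf : well_founded lt).
Variables (S : Type) (O : (S -> S -> Prop) -> (S -> S -> Prop)).
Variable R0 : S -> S -> Prop.

Local Notation Rit := (Oiter Hwf O R0).

Lemma Oiter_eq a : Rit a = @Oiter_step B lt S O R0 a (fun g _ => Rit g).
Proof.
rewrite /Oiter Fix_eq // => x f g H; suff -> : f = g by [].
by apply: functional_extensionality_dep => y; apply: functional_extensionality_dep.
Qed.

Lemma Oiter_zero a : is_zero lt a -> Rit a = R0.
Proof.
move=> za; apply/funext => s; apply/funext => t; rewrite Oiter_eq /Oiter_step.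
apply/propext; split => [[[//]|[[g [h _]]|[[] //]]]|r0].
- by case: (za g h).
- by left.
Qed.

Lemma Oiter_refl : (forall s, R0 s s) -> (forall Rl s, O Rl s s) ->
  forall a s, Rit a s s.
Proof.
move=> R0refl Orefl a; elim: (Hwf a) => {}a _ IH s; rewrite Oiter_eq /Oiter_step.
case: (pselect (is_zero lt a)) => za; first by left.
right; case: (nonzero_cases za) => [la|[g sg]]; [right|left].
- by split => // g h; exact: IH.
- by exists g, sg.1.
Qed.

Hypothesis Htotal : forall a b, lt a b \/ a = b \/ lt b a.

Lemma Oiter_succ a g s t : is_succ_of lt a g -> Rit a s t -> O (Rit g) s t.
Proof.
move=> sg; rewrite Oiter_eq /Oiter_step => -[[za _]|[[g' [_ [sg' HO]]]|[[_ nsucc] _]]].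
- by case: (za g sg.1).
- suff <- : g' = g by [].
  case: (Htotal g g') => [gg'|[//|g'g]]; first by case: (sg.2 g' gg' sg'.1).
  by case: (sg'.2 g g'g sg.1).
- by case: nsucc; exists g.
Qed.

Lemma Oiter_below a s t g : Rit a s t -> lt g a ->
  exists c, le lt g c /\ lt c a /\ O (Rit c) s t.
Proof.
move=> Ha ga; case: (pselect (is_zero lt a)) => [za|nza]; first by case: (za g ga).
case: (nonzero_cases nza) => [la|[g' sg']].
- have [d sd] := succ_exists Hwf ga.
  have da := succ_below_limit Htotal la ga sd.
  move: Ha; rewrite Oiter_eq /Oiter_step => -[[za _]|[[g3 [_ [sg3 _]]]|[_ Hall]]].
  + by case: (za g ga).
  + by case: la => _ []; exists g3.
  + by exists g; split; [right|split; [|exact: Oiter_succ sd (Hall d da)]].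
- exists g'; split; [exact: (lt_succ_le Htotal sg' ga)|split; [by case: sg'|]].
  exact: Oiter_succ sg' Ha.
Qed.

End Iterates.

Lemma rat_between_unit (R : realType) (u v : R) :
  0 <= u -> v <= 1 -> u < v -> exists r : rat, 0 <= r <= 1 /\ u < ratr r < v.
Proof.
move=> u0 v1 uv; have [r] := rat_in_itvoo uv; rewrite in_itv /= => /andP[ur rv].
exists r; split; last by rewrite ur rv.
apply/andP; split; first by rewrite -(ler0q R) ltW // (le_lt_trans u0).
by rewrite -(ler_rat R) rmorph1 ltW // (lt_le_trans rv).
Qed.

Section LMPFacts.
Variables (R : realType) (S : Type) (Sigma : set (set S)).
Variable tau : nat -> S -> set S -> \bar R.

Lemma closed_of_fixed (Rl : S -> S -> Prop) A :
  Sigma A -> (forall s u, A s -> Rl s u -> u = s) -> closed_sets Sigma Rl A.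
Proof. by move=> SA fixA; split => // x s Ax /(fixA _ _ Ax) ->. Qed.

(* ~_e-equivalent states have the same total a-mass, as soon as it lies in
   [0,1]: the formulas <a>_{>r} T with r rational detect it. *)
Lemma sim_e_mass a s t (x w : R) : sim_e tau s t ->
  0 <= x <= 1 -> 0 <= w <= 1 ->
  tau a s setT = x%:E -> tau a t setT = w%:E -> x = w.
Proof.
move=> st /andP[x0 x1] /andP[w0 w1] sx tw.
have detect r : 0 <= r <= 1 -> (ratr r < x <-> ratr r < w).
  move=> r01; rewrite -!lte_fin -sx -tw.
  apply: (st (denot tau (FDia a r FTop))).
  by apply: sub_gen_smallest; exists (FDia a r FTop).
case: (ltgtP x w) => // [xw|wx].
- have [r [r01 /andP[xr rw]]] := rat_between_unit x0 w1 xw.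
  by move: (proj2 (detect r r01) rw); rewrite ltNge (ltW xr).
- have [r [r01 /andP[wr rx]]] := rat_between_unit w0 x1 wx.
  by move: (proj1 (detect r r01) rx); rewrite ltNge (ltW wr).
Qed.

End LMPFacts.

Lemma sval_image_setT (R : realType) : sval @` [set: I R] = `]0, 1[%classic.
Proof.
apply/seteqP; split=> x /=; rewrite in_itv /=.
- by move=> [[y y01] _ <-].
- by move=> x01; exists (exist _ x x01).
Qed.

Lemma extension_total_mass (R : realType) (V : set (I R))
    (m : {measure set (BVType V) -> \bar R}) :
  (forall A, Borel_I A -> m A = lebesgue_measure (sval @` A)) -> m setT = 1%E.
Proof.
have BorelT : Borel_I [set: I R] by rewrite /Borel_I /= sval_image_setT.
move=> ext; rewrite ext // sval_image_setT lebesgue_measure_itv /=.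
by rewrite lte_fin ltr01 oppr0 adde0.
Qed.

Section Sbeta.
Variables (R : realType) (B : Type) (lt : B -> B -> Prop).
Hypothesis Htotal : forall a b, lt a b \/ a = b \/ lt b a.
Variables (q : nat -> R) (alpha : nat -> B -> B) (V : set (I R)).
Variables m0 m1 : {measure set (BVType V) -> \bar R}.
Hypothesis m0T : m0 setT = 1%E.
Hypothesis m1T : m1 setT = 1%E.

Local Notation tau := (tauS lt q alpha m0 m1).
Local Notation Sig := (SigmaS (B:=B) V).

Lemma BV_setT : BV V setT.
Proof. exact: (@measurableT _ (BVType V)). Qed.

Lemma BV_V : BV V V.
Proof. by apply: sub_gen_smallest; right. Qed.

Lemma rect_measurable (A : set (I R)) (C : set B) : BV V A -> Sig (A `*` C).
Proof. by move=> BA; apply: sub_gen_smallest; exists A, C. Qed.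

Lemma section_rect (A : set (I R)) (c g : B) :
  section (A `*` [set c]) g = if `[< g = c >] then A else set0.
Proof.
case: (pselect (g = c)) => [->|gc].
- by rewrite asboolT //; apply/seteqP; split => x /=; [case|].
- by rewrite asboolF //; apply/seteqP; split => x /= //; case.
Qed.

Lemma tau_zero n x g A : is_zero lt g ->
  tau n (x, g) A = ((sval x)%:E * m0 (section A g))%E.
Proof. by move=> zg; rewrite /tauS asboolT. Qed.

Lemma tau_pos n x g A : ~ is_zero lt g ->
  tau n (x, g) A = if sval x < q n then m0 (section A (alpha n g))
                   else m1 (section A (alpha n g)).
Proof. by move=> zg; rewrite /tauS asboolF. Qed.

Lemma tau_mass n x g :
  tau n (x, g) setT = (if `[< is_zero lt g >] then sval x else 1)%:E.
Proof.
have secT h : section (setT : set (state R B)) h = setT by apply/seteqP.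
case: (pselect (is_zero lt g)) => zg.
- by rewrite tau_zero // secT m0T mule1 asboolT.
- by rewrite tau_pos // secT asboolF //; case: ifP.
Qed.

Lemma sval_I_bounds (x : I R) : 0 < sval x < 1.
Proof. by case: x. Qed.

Lemma mass_level_zero z y g eta : is_zero lt g ->
  tau 0 (z, g) setT = tau 0 (y, eta) setT -> (y, eta) = (z, g).
Proof.
move=> zg; rewrite !tau_mass asboolT //.
case: (pselect (is_zero lt eta)) => ze.
- rewrite asboolT // => -[e].
  by congr pair; [exact: val_inj|exact: (zero_uniq Htotal ze zg)].
- rewrite asboolF // => -[e].
  by have /andP[_] := sval_I_bounds z; rewrite e ltxx.
Qed.

Lemma mass_level_pos z y g eta : ~ is_zero lt g ->
  tau 0 (z, g) setT = tau 0 (y, eta) setT -> ~ is_zero lt eta.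
Proof.
move=> zg + ze; rewrite !tau_mass asboolF // asboolT // => -[e].
by have /andP[_] := sval_I_bounds y; rewrite -e ltxx.
Qed.

Lemma sim_e_level_zero z g u : is_zero lt g -> sim_e tau (z, g) u -> u = (z, g).
Proof.
case: u => y eta zg st; apply: mass_level_zero => //.
have in01 (x : I R) h : 0 <= (if `[< is_zero lt h >] then sval x else 1) <= 1.
  case: ifP => _; last by rewrite ler01 lexx.
  by case/andP: (sval_I_bounds x) => /ltW -> /ltW ->.
rewrite !tau_mass; congr (_%:E).
exact: (sim_e_mass (a := 0%N) st (in01 z g) (in01 y eta) (tau_mass _ _ _) (tau_mass _ _ _)).
Qed.

Definition level_fixed (Rl : state R B -> state R B -> Prop) (g : B) : Prop :=
  forall z u, Rl (z, g) u -> u = (z, g).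

(* If Rl fixes level g, every rectangle A x {g} with A in B_V is Rl-closed,
   so it is a legitimate test set for O(Rl). *)
Lemma level_fixed_closed Rl (A : set (I R)) g :
  BV V A -> level_fixed Rl g -> closed_sets Sig Rl (A `*` [set g]).
Proof.
move=> BA fixg; apply: closed_of_fixed; first exact: rect_measurable.
by move=> [z h] u [_ /= ->]; exact: fixg.
Qed.

Lemma closed_setT Rl : closed_sets Sig Rl setT.
Proof.
by split => //; rewrite -setXTT; exact: rect_measurable BV_setT.
Qed.

Lemma alpha_test n z y g eta : ~ is_zero lt g -> ~ is_zero lt eta ->
  tau n (z, g) (setT `*` [set alpha n g]) = tau n (y, eta) (setT `*` [set alpha n g]) ->
  alpha n eta = alpha n g.
Proof.
move=> zg ze; rewrite !tau_pos // !section_rect asboolT //.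
case: (pselect (alpha n eta = alpha n g)) => [//|ne]; rewrite asboolF //.
by case: ifP => _; case: ifP => _; rewrite ?m0T ?m1T ?measure0 => /(congr1 fine)/eqP;
  rewrite /= oner_eq0.
Qed.

Hypothesis q_onto : forall x, ratI x -> exists n, q n = x.
Hypothesis m01 : m0 V <> m1 V.

(* Testing with V x {alpha_n(g)} separates the first coordinates: a rational
   q_n strictly between them makes the two states use different measures. *)
Lemma V_test_not_lt x y g : ~ is_zero lt g ->
  (forall n, tau n (x, g) (V `*` [set alpha n g]) = tau n (y, g) (V `*` [set alpha n g])) ->
  ~ sval x < sval y.
Proof.
move=> zg same xy.
have /andP[x0 _] := sval_I_bounds x; have /andP[_ y1] := sval_I_bounds y.
have [r [_ /andP[xr ry]]] := rat_between_unit (ltW x0) (ltW y1) xy.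
have [n qn] : exists n, q n = ratr r.
  by apply: q_onto; split; [exists r|rewrite (lt_trans x0 xr) (lt_trans ry y1)].
have := same n; rewrite !tau_pos // !section_rect asboolT // qn xr.
by rewrite ltNge (ltW ry).
Qed.

Lemma V_test x y g : ~ is_zero lt g ->
  (forall n, tau n (x, g) (V `*` [set alpha n g]) = tau n (y, g) (V `*` [set alpha n g])) ->
  x = y.
Proof.
move=> zg same; apply: val_inj; case: (ltgtP (sval x) (sval y)) => // xy.
- by case: (V_test_not_lt zg same xy).
- by case: (V_test_not_lt zg (fun n => esym (same n)) xy).
Qed.

End Sbeta.

Section Induction.
Variables (R : realType) (B : Type) (lt : B -> B -> Prop).
Hypothesis Hwf : well_founded lt.
Hypothesis Htrans : forall a b c, lt a b -> lt b c -> lt a c.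
Hypothesis Htotal : forall a b, lt a b \/ a = b \/ lt b a.
Variables (alpha : nat -> B -> B) (q : nat -> R) (V : set (I R)).
Hypothesis Halpha : fundamental_sequences lt alpha.
Hypothesis q_onto : forall x, ratI x -> exists n, q n = x.
Variables m0 m1 : {measure set (BVType V) -> \bar R}.
Hypothesis m0T : m0 setT = 1%E.
Hypothesis m1T : m1 setT = 1%E.
Hypothesis m01 : m0 V <> m1 V.

Local Notation tau := (tauS lt q alpha m0 m1).
Local Notation Sig := (SigmaS (B:=B) V).
Local Notation Rit := (Oiter Hwf (Oop Sig tau) (sim_e tau)).

Lemma level_fixed_step b : ~ is_zero lt b ->
  (forall c, lt c b -> forall g, le lt g c -> level_fixed (Rit c) g) ->
  forall g, le lt g b -> level_fixed (Rit b) g.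
Proof.
move=> nzb IH g gb z [y eta] Hb.
have test h : lt h b -> exists Rl,
    Oop Sig tau Rl (z, g) (y, eta) /\ level_fixed Rl h.
  move=> hb; have [c [hc [cb HO]]] := Oiter_below Htotal Hb hb.
  by exists (Rit c); split => //; exact: IH.
have mass : tau 0 (z, g) setT = tau 0 (y, eta) setT.
  have [c0 c0b] := nonzero_has_pred nzb; have [Rl [HO _]] := test c0 c0b.
  by apply: HO; exact: closed_setT.
case: (pselect (is_zero lt g)) => zg; first exact: (mass_level_zero Htotal m0T m1T zg mass).
have ze := mass_level_pos m0T m1T zg mass.
have alpha_b n : lt (alpha n g) b.
  have gn := alpha_lt Halpha n zg.
  by case: gb => [gb|<- //]; exact: Htrans gn gb.
have same_alpha n : alpha n eta = alpha n g.
  have [Rl [HO fixRl]] := test _ (alpha_b n).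
  exact: (alpha_test m0T m1T zg ze (HO n _ (level_fixed_closed (@BV_setT _ V) fixRl))).
have eta_g : eta = g.
  exact: (fundamental_sequences_inj Hwf Htrans Htotal Halpha ze zg same_alpha).
subst eta; congr pair; apply/esym/(V_test q_onto m01 zg) => n.
have [Rl [HO fixRl]] := test _ (alpha_b n).
exact: HO n _ (level_fixed_closed (@BV_V _ V) fixRl).
Qed.

Lemma level_fixed_iter b g : le lt g b -> level_fixed (Rit b) g.
Proof.
elim: (Hwf b) g => {}b _ IH g gb.
case: (pselect (is_zero lt b)) => zb; last exact: level_fixed_step.
have zg : is_zero lt g by case: gb => [/zb|->].
by move=> z u; rewrite Oiter_zero //; exact: (sim_e_level_zero Htotal m0T m1T zg).
Qed.

End Induction.

Theorem lemma5p8
  (R : realType)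
  (* the ordinal beta <= omega_1, as a well-ordered type of its elements *)
  (B : Type) (lt : B -> B -> Prop)
  (Hwf : well_founded lt)
  (Htrans : forall a b c, lt a b -> lt b c -> lt a c)
  (Htotal : forall a b, lt a b \/ a = b \/ lt b a)
  (Hcount : countable_initial_segments lt)
  (alpha : nat -> B -> B) (Halpha : fundamental_sequences lt alpha)
  (* enumeration of Q cap I *)
  (q : nat -> R) (Hq : enumerates_QI q)
  (* the Lebesgue nonmeasurable set V and the two extensions of m *)
  (V : set (I R)) (HV : ~ lebesgue_measurable (sval @` V))
  (m0 m1 : {measure set (BVType V) -> \bar R})
  (Hm0 : forall A, Borel_I A -> m0 A = lebesgue_measure (sval @` A))
  (Hm1 : forall A, Borel_I A -> m1 A = lebesgue_measure (sval @` A))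
  (Hm01 : m0 V <> m1 V)
  (a : B) :
  let tau := tauS lt q alpha m0 m1 in
  let Sig := SigmaS (B:=B) V in
  let Ra := Oiter Hwf (Oop Sig tau) (sim_e tau) a in
  (forall s t : state R B, le lt s.2 a -> le lt t.2 a -> (Ra s t <-> s = t)) /\
  closed_sets Sig Ra (V `*` [set a]).
Proof.
move=> tau Sig Ra.
have m0T := extension_total_mass Hm0; have m1T := extension_total_mass Hm1.
have [_ [_ q_onto]] := Hq.
have fixed g : le lt g a -> level_fixed Ra g.
  exact: (level_fixed_iter Htrans Htotal Halpha q_onto m0T m1T Hm01).
split.
- move=> [z g] t ga _; split => [Rzt|<-]; first exact/esym/(fixed g ga).
  by apply: Oiter_refl => [s A _|Rl s n E _].
- exact: (level_fixed_closed (@BV_V _ V) (fixed a (or_intror erefl))).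
Qed.
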